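(* Let $G$ be a graph of diameter $3$. Then $\chi_{ei}(G)\ge \rho(G)\ge \gamma_2(G)$. Moreover, there are graphs of diameter $3$ for which both equalities hold.
   Context: All graphs are finite and simple. A path $P_4$ in $G$ is a sequence $uxyv$ of four distinct vertices with $ux,xy,yv\in E(G)$; $u,v$ are its end vertices. An $e$-injective $k$-coloring of $G$ is a function $f:V(G)\to\{1,\dots,k\}$ with $f(u)\ne f(v)$ whenever $u,v$ are the end vertices of some path $P_4$ in $G$; $\chi_{ei}(G)$ is the least such $k$. A set $B\subseteq V(G)$ is a packing if $N[u]\cap N[v]=\emptyset$ for all distinct $u,v\in B$ (where $N[v]$ is the closed neighborhood); the packing number $\rho(G)$ is the maximum size of a packing. A set $D\subseteq V(G)$ is a 2-distance dominating set if every vertex not in $D$ is at distance at most $2$ from some vertex of $D$; $\gamma_2(G)$ is the minimum size of such a set. *)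

From mathcomp Require Import all_boot.
Set Implicit Arguments. Unset Strict Implicit. Unset Printing Implicit Defensive.

Section Graphs.
Variables (T : finType) (e : rel T).

Definition simple_graph : Prop := symmetric e /\ irreflexive e.

Definition ball (k : nat) (u : T) : {set T} :=
  iter k (fun S : {set T} => S :|: [set w | [exists x in S, e x w]]) [set u].

Definition dist_le (k : nat) (u v : T) : bool := v \in ball k u.

Definition diameter3 : Prop :=
  (forall u v, dist_le 3 u v) /\ (exists u v, ~~ dist_le 2 u v).

Definition P4 (u x y v : T) : bool :=
  [&& u != x, u != y, u != v, x != y, x != v, y != v, e u x, e x y & e y v].

Definition ei_coloring (k : nat) (f : T -> 'I_k) : bool :=
  [forall u, forall x, forall y, forall v, P4 u x y v ==> (f u != f v)].

Definition ei_colorable (k : nat) : bool :=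
  [exists f : {ffun T -> 'I_k}, ei_coloring f].

Lemma ei_colorable_exists : exists k, ei_colorable k.
Proof.
exists #|T|; apply/existsP; exists [ffun x => enum_rank x].
apply/forallP=> u; apply/forallP=> x; apply/forallP=> y; apply/forallP=> v.
apply/implyP=> /and5P [_ _ uv _ _]; rewrite !ffunE.
by apply: contra uv => /eqP /enum_rank_inj ->.
Qed.

Definition chi_ei : nat := ex_minn ei_colorable_exists.

Definition closed_nbhd (u : T) : {set T} := [set w | (w == u) || e u w].

Definition packing (B : {set T}) : bool :=
  [forall u in B, forall v in B, (u != v) ==> [disjoint closed_nbhd u & closed_nbhd v]].

Definition rho : nat := \max_(B : {set T} | packing B) #|B|.

Definition two_dist_dominating (D : {set T}) : bool :=
  [forall v, (v \notin D) ==> [exists d in D, dist_le 2 d v]].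

Definition gamma2_size (k : nat) : bool :=
  [exists D : {set T}, two_dist_dominating D && (#|D| == k)].

Lemma gamma2_exists : exists k, gamma2_size k.
Proof.
exists #|[set: T]|; apply/existsP; exists [set: T]; rewrite eqxx andbT.
by apply/forallP=> v; rewrite in_setT.
Qed.

Definition gamma2 : nat := ex_minn gamma2_exists.

End Graphs.

(* Two vertices of a packing have disjoint closed neighbourhoods, i.e. lie at
   distance at least 3; in a graph of diameter 3 they are therefore the ends of
   a P4 and get distinct colours in every e-injective colouring, so
   rho <= chi_ei.  A maximum packing B is 2-distance dominating, since a vertex
   at distance at least 3 from all of B could be added to B, so
   gamma2 <= rho.  In the 6-cycle every vertex has exactly one vertex at
   distance 3, its antipode: packings have at most two vertices, no single
   vertex 2-dominates, and colouring the two halves of the cycle is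
   e-injective, so chi_ei = rho = gamma2 = 2. *)

From mathcomp Require Import all_boot.

Set Implicit Arguments. Unset Strict Implicit. Unset Printing Implicit Defensive.

Section Balls.
Variables (T : finType) (e : rel T).

Lemma in_ball0 u v : (v \in ball e 0 u) = (v == u).
Proof. by rewrite inE. Qed.

Lemma in_ballS k u v :
  (v \in ball e k.+1 u) = (v \in ball e k u) || [exists x in ball e k u, e x v].
Proof. by rewrite /ball iterS in_setU inE. Qed.

Lemma ball_subS k u : ball e k u \subset ball e k.+1 u.
Proof. by apply/subsetP => v vb; rewrite in_ballS vb. Qed.

Lemma ball_center k u : u \in ball e k u.
Proof. by elim: k => [|k IHk]; rewrite ?in_ball0 // in_ballS IHk. Qed.

Lemma mem_ball_edge k u x v : x \in ball e k u -> e x v -> v \in ball e k.+1 u.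
Proof.
by move=> xb xv; rewrite in_ballS; apply/orP; right; apply/exists_inP; exists x.
Qed.

Lemma ball1E u : ball e 1 u = closed_nbhd e u.
Proof.
apply/setP => v; rewrite in_ballS in_ball0 inE; congr (_ || _).
apply/exists_inP/idP => [[x /[!in_ball0] /eqP ->] //|uv].
by exists u; rewrite ?in_ball0.
Qed.

Lemma dist_le2_nbhd u v : symmetric e ->
  dist_le e 2 u v = ~~ [disjoint closed_nbhd e u & closed_nbhd e v].
Proof.
move=> sym; rewrite /dist_le in_ballS ball1E; apply/orP/pred0Pn => /=.
- case=> [vu|/exists_inP [x xu xv]]; first by exists v; rewrite vu !inE eqxx.
  by exists x; rewrite xu !inE sym xv orbT.
- case=> x /andP [xu]; rewrite inE => /orP [/eqP <-|vx]; first by left.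
  by right; apply/exists_inP; exists x; rewrite // sym.
Qed.

Lemma P4_of_dist3 u v : irreflexive e ->
  dist_le e 3 u v -> ~~ dist_le e 2 u v -> exists x y, P4 e u x y v.
Proof.
move=> irr; rewrite /dist_le => v3 v2.
have v1 : v \notin ball e 1 u by apply: contra v2; apply/subsetP/ball_subS.
move: v3; rewrite in_ballS (negbTE v2) => /exists_inP [y y2 yv].
have y1 : y \notin ball e 1 u by apply: contra v2 => y1; apply: mem_ball_edge yv.
move: y2; rewrite in_ballS (negbTE y1) => /exists_inP [x].
rewrite ball1E inE => /orP [/eqP ->|ux] xy.
  by rewrite (mem_ball_edge (ball_center 0 u) xy) in y1.
have x1 : x \in ball e 1 u by rewrite ball1E inE ux orbT.
have neq_ux : u != x by apply: contraTneq ux => ->; rewrite irr.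
have neq_uy : u != y by apply: contra y1 => /eqP <-; rewrite ball1E inE eqxx.
have neq_uv : u != v by apply: contra v2 => /eqP <-; apply: ball_center.
have neq_xy : x != y by apply: contraTneq xy => ->; rewrite irr.
have neq_xv : x != v by apply: contra v1 => /eqP <-.
have neq_yv : y != v by apply: contraTneq yv => ->; rewrite irr.
by exists x, y; rewrite /P4 neq_ux neq_uy neq_uv neq_xy neq_xv neq_yv ux xy yv.
Qed.

End Balls.

Section Bounds.
Variables (T : finType) (e : rel T).

Lemma ei_coloringP k (f : T -> 'I_k) :
  reflect (forall u x y v, P4 e u x y v -> f u != f v) (ei_coloring e f).
Proof.
apply: (iffP forallP) => [fP u x y v | fP u].
  by move: (fP u) => /forallP/(_ x)/forallP/(_ y)/forallP/(_ v)/implyP.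
by do 3!apply/forallP => ?; apply/implyP; apply: fP.
Qed.

Lemma ei_coloring_colorable k (f : T -> 'I_k) : ei_coloring e f -> ei_colorable e k.
Proof.
move/ei_coloringP => fP; apply/existsP; exists (finfun f).
by apply/ei_coloringP => u x y v; rewrite !ffunE; apply: fP.
Qed.

Lemma chi_ei_colorable : ei_colorable e (chi_ei e).
Proof. by rewrite /chi_ei; case: ex_minnP. Qed.

Lemma chi_ei_min k : ei_colorable e k -> chi_ei e <= k.
Proof. by rewrite /chi_ei; case: ex_minnP => n _; apply. Qed.

Lemma gamma2_dominating : exists2 D, two_dist_dominating e D & #|D| = gamma2 e.
Proof.
by rewrite /gamma2; case: ex_minnP => n /existsP [D /andP [DD /eqP <-]]; exists D.
Qed.

Lemma gamma2_min D : two_dist_dominating e D -> gamma2 e <= #|D|.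
Proof.
move=> DD; rewrite /gamma2; case: ex_minnP => n _; apply.
by apply/existsP; exists D; rewrite DD eqxx.
Qed.

Lemma leq_card_rho (B : {set T}) : packing e B -> #|B| <= rho e.
Proof. exact: leq_bigmax_cond (fun B : {set T} => #|B|) _. Qed.

Lemma gamma2_gt1 (x0 : T) :
  (forall u, exists v, ~~ dist_le e 2 u v) -> 1 < gamma2 e.
Proof.
move=> far; have [D DD <-] := gamma2_dominating.
have [d dD] : exists d, d \in D.
  have /forallP /(_ x0) := DD.
  by case: (boolP (x0 \in D)) => [x0D|_ /exists_inP [d dD _]]; [exists x0 | exists d].
have [v dv] := far d; apply/card_gt1P.
case: (boolP (v \in D)) => [vD|/(implyP (forallP DD v)) /exists_inP [d' d'D d'v]].
  by exists d, v; split=> //; apply: contraNneq _ dv => <-; exact: ball_center.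
by exists d, d'; split=> //; apply: contraNneq _ dv => ->.
Qed.

Hypothesis sym : symmetric e.

Lemma dist_le2C u v : dist_le e 2 u v = dist_le e 2 v u.
Proof. by rewrite !dist_le2_nbhd // disjoint_sym. Qed.

Lemma packingP (B : {set T}) :
  reflect {in B &, forall u v, u != v -> ~~ dist_le e 2 u v} (packing e B).
Proof.
apply: (iffP forall_inP) => [pB u v uB vB uv | pB u uB].
  by rewrite dist_le2_nbhd // negbK; apply: (implyP (forall_inP (pB u uB) v vB)).
apply/forall_inP => v vB; apply/implyP => uv.
by rewrite -[_ _ _]negbK -dist_le2_nbhd // pB.
Qed.

Lemma packing_setU1 (B : {set T}) v : packing e B ->
  (forall d, d \in B -> ~~ dist_le e 2 d v) -> packing e (v |: B).
Proof.
move=> /packingP pB far; apply/packingP => a b.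
rewrite !in_setU1 => /orP [/eqP ->|aB] /orP [/eqP ->|bB]; rewrite ?eqxx //.
- by move=> _; rewrite dist_le2C far.
- by move=> _; rewrite far.
- exact: pB.
Qed.

Lemma gamma2_le_rho : gamma2 e <= rho e.
Proof.
have p0 : packing e set0 by apply/packingP => u v; rewrite inE.
case: (arg_maxnP (fun B : {set T} => #|B|) p0) => B pB Bmax.
apply: leq_trans (leq_card_rho pB); apply: gamma2_min.
apply/forallP => v; apply/implyP => vB; apply/exists_inP.
case: (boolP [exists d in B, dist_le e 2 d v]) => [/exists_inP //|/exists_inP near].
have /Bmax : packing e (v |: B).
  by apply: packing_setU1 => // d dB; apply/negP => dv; apply: near; exists d.
by rewrite /= cardsU1 vB add1n ltnn.
Qed.

Lemma rho_le2 :
  (forall u v w, ~~ dist_le e 2 u v -> ~~ dist_le e 2 u w -> v = w) -> rho e <= 2.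
Proof.
move=> far_uniq; apply/bigmax_leqP => B /packingP pB.
case: (set_0Vmem B) => [->|[u uB]]; first by rewrite cards0.
rewrite (cardsD1 u) uB ltnS; apply/card_le1_eqP => v w.
rewrite !in_setD1 => /andP [vu vB] /andP [wu wB].
by apply: (far_uniq u); apply: pB; rewrite // eq_sym.
Qed.

Hypothesis irr : irreflexive e.

Lemma ei_coloring_inj_packing k (f : T -> 'I_k) (B : {set T}) :
  (forall u v, dist_le e 3 u v) -> ei_coloring e f -> packing e B ->
  {in B &, injective f}.
Proof.
move=> diam /ei_coloringP fP /packingP pB u v uB vB fuv; apply/eqP.
apply: contraTT isT => uv.
have [x [y uxyv]] := P4_of_dist3 irr (diam u v) (pB u v uB vB uv).
by move: (fP _ _ _ _ uxyv); rewrite fuv eqxx.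
Qed.

Lemma rho_le_chi_ei : (forall u v, dist_le e 3 u v) -> rho e <= chi_ei e.
Proof.
move=> diam; have /existsP [f fP] := chi_ei_colorable.
apply/bigmax_leqP => B pB.
rewrite -(card_in_imset (ei_coloring_inj_packing diam fP pB)).
by apply: leq_trans (max_card _) _; rewrite card_ord.
Qed.

End Bounds.

Section DecideDistance.
Variables (T : finType) (e : rel T) (s : seq T).
Hypothesis s_full : forall x, x \in s.

Lemma all_fullP (P : pred T) : reflect (forall x, P x) (all P s).
Proof. by apply: (iffP allP) => P_all x; rewrite ?P_all. Qed.

(* [ball] is built from locked finset operations that do not reduce, so
   distances are decided by a search over the explicit enumeration [s]. *)
Fixpoint dist_leb k u v : bool :=
  if k is k'.+1 then dist_leb k' u v || has (fun x => dist_leb k' u x && e x v) s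
  else v == u.

Lemma dist_lebE k u v : dist_le e k u v = dist_leb k u v.
Proof.
elim: k v => [|k IHk] v; first exact: in_ball0.
rewrite /dist_le in_ballS /= -IHk; congr (_ || _).
apply/exists_inP/hasP => [[x xb xv]|[x _ /andP [xb xv]]]; exists x => //.
- by rewrite -IHk; apply/andP.
- by rewrite -[_ \in _]/(dist_le e k u x) IHk.
Qed.

End DecideDistance.

Definition cycle_graph n : rel 'I_n := fun i j => (j == ordS i) || (i == ordS j).
Arguments cycle_graph : clear implicits.

Definition antipode6 (i : 'I_6) : 'I_6 := ordS (ordS (ordS i)).

(* The ends of every P4 of the 6-cycle are antipodal, hence in different halves. *)
Definition half6 (i : 'I_6) : 'I_2 := if i < 3 then ord0 else ord_max.

Notation C6 := (cycle_graph 6).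

Definition verts6 : seq 'I_6 := traject (@ordS 6) ord0 6.

Lemma mem_verts6 (i : 'I_6) : i \in verts6.
Proof. by case: i => [[|[|[|[|[|[|m]]]]]] Hm]. Qed.

Notation all6P := (all_fullP mem_verts6).
Notation dist6E := (dist_lebE C6 mem_verts6).

Lemma C6_simple : simple_graph C6.
Proof.
split=> [i j|i]; first by rewrite /cycle_graph orbC.
by apply/negbTE; move: i; apply/all6P; vm_compute.
Qed.

Lemma C6_dist3 u v : dist_le C6 3 u v.
Proof.
have /all6P/(_ u)/all6P/(_ v) :
  all (fun u => all (dist_leb C6 verts6 3 u) verts6) verts6 by vm_compute.
by rewrite dist6E.
Qed.

Lemma C6_far u v : ~~ dist_le C6 2 u v = (v == antipode6 u).
Proof.
have /all6P/(_ u)/all6P/(_ v)/eqP : all (fun u => all (fun v =>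
  ~~ dist_leb C6 verts6 2 u v == (v == antipode6 u)) verts6) verts6 by vm_compute.
by rewrite dist6E.
Qed.

Lemma C6_diameter3 : diameter3 C6.
Proof. by split; [apply: C6_dist3 | exists ord0, (antipode6 ord0); rewrite C6_far]. Qed.

Lemma C6_ei_coloring : ei_coloring C6 half6.
Proof.
have H : all (fun u => all (fun x => all (fun y => all (fun v =>
    P4 C6 u x y v ==> (half6 u != half6 v)) verts6) verts6) verts6) verts6.
  by vm_compute.
apply/ei_coloringP => u x y v.
by move/all6P: H => /(_ u)/all6P/(_ x)/all6P/(_ y)/all6P/(_ v)/implyP.
Qed.

Lemma C6_chi_ei_le2 : chi_ei C6 <= 2.
Proof. exact: chi_ei_min (ei_coloring_colorable C6_ei_coloring). Qed.

Lemma C6_rho_le2 : rho C6 <= 2.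
Proof.
have [sym _] := C6_simple.
by apply: rho_le2 => // u v w; rewrite !C6_far => /eqP -> /eqP ->.
Qed.

Lemma C6_gamma2_gt1 : 1 < gamma2 C6.
Proof. by apply: (gamma2_gt1 ord0) => u; exists (antipode6 u); rewrite C6_far. Qed.

Theorem proposition2p7 :
  (forall (T : finType) (e : rel T),
      simple_graph e -> diameter3 e ->
      rho e <= chi_ei e /\ gamma2 e <= rho e) /\
  (exists (T : finType) (e : rel T),
      [/\ simple_graph e, diameter3 e, chi_ei e = rho e & rho e = gamma2 e]).
Proof.
split=> [T e [sym irr] [diam _]|].
  by split; [apply: rho_le_chi_ei | apply: gamma2_le_rho].
have [sym irr] := C6_simple.
have rho_le_chi := rho_le_chi_ei sym irr C6_dist3.
have gamma2_le := gamma2_le_rho sym.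
have two_le_rho := leq_trans C6_gamma2_gt1 gamma2_le.
exists 'I_6, C6; split; [exact: C6_simple | exact: C6_diameter3 | |]; apply/eqP.
- by rewrite eqn_leq rho_le_chi (leq_trans C6_chi_ei_le2 two_le_rho).
- by rewrite eqn_leq gamma2_le (leq_trans C6_rho_le2 C6_gamma2_gt1).
Qed.
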